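(* Let $(Z,d)$ be an infinite compact metric space and $\Gamma$ a regular approximation graph for $Z$ with refining sequence $(\mathcal V_n)_{n\ge0}$. Then $$\mathcal I_\Gamma=\pi_\Gamma^{-1}\Big(\bigcap_{n\in\mathbb N}\bigcup\mathcal V_n^{\mathrm{ess}}\Big).$$
   Context: A refining sequence is a sequence $(\mathcal V_n)_{n\ge0}$ of finite covers of $Z$, all open or all closed with nonempty interiors, with $\mathcal V_0=\{Z\}$, each element of $\mathcal V_{n+1}$ contained in some element of $\mathcal V_n$, and $\max_{v\in\mathcal V_n}\operatorname{diam}v\to0$. Its approximation graph $\Gamma$ has vertices $\coprod_n\mathcal V_n$ and an edge from $v_n\in\mathcal V_n$ to $v_{n+1}\in\mathcal V_{n+1}$ whenever $v_{n+1}\subset v_n$. The infinite path space $\mathcal P_\Gamma$ is the set of sequences of edges $(p_n)_{n\ge0}$, $p_n$ from some $v_n\in\mathcal V_n$ to some $v_{n+1}\in\mathcal V_{n+1}$, consecutive edges sharing their common vertex; it carries the compact topology generated by cylinder sets (paths with prescribed first finitely many edges). Writing $r(p_n)=v_{n+1}$, the map $\pi_\Gamma:\mathcal P_\Gamma\to Z$ is $\pi_\Gamma(\tilde p)=$ the unique point of $\bigcap_{n\ge0}\operatorname{cl}(r(p_n))$; it is continuous and surjective. $\mathcal I_\Gamma=\{\tilde p\in\mathcal P_\Gamma:\#\pi_\Gamma^{-1}(\pi_\Gamma(\tilde p))=1\}$. The overlapping set is $\mathcal Y_n=\{\operatorname{cl}(v)\cap\operatorname{cl}(w):v\ne w\in\mathcal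 V_n\}$, and $v^{\mathrm{ess}}=\operatorname{int}(v)\setminus\bigcup\mathcal Y_n$ for $v\in\mathcal V_n$, $\mathcal V_n^{\mathrm{ess}}=\{v^{\mathrm{ess}}:v\in\mathcal V_n\}$. $\Gamma$ is regular if for every $n\in\mathbb N$ and $v\in\mathcal V_n$: $v=\bigcup\{w\in\mathcal V_{n+1}:w\subset v\}$ and $v^{\mathrm{ess}}\ne\varnothing$. *)

From HB Require Import structures.
From mathcomp Require Import all_boot all_order all_algebra.
From mathcomp Require Import all_classical all_reals all_analysis.
Set Implicit Arguments. Unset Strict Implicit. Unset Printing Implicit Defensive.
Import Order.TTheory GRing.Theory Num.Theory.
Local Open Scope classical_set_scope.
Local Open Scope ring_scope.

Section ApproxGraph.
Context {R : realType} {Z : metricType R}.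

(* diameter of a subset, in the extended reals (-oo for the empty set) *)
Definition diam (A : set Z) : \bar R :=
  ereal_sup [set r | exists x y, [/\ A x, A y & r = (mdist x y)%:E]].

Definition refining_sequence (V : nat -> set (set Z)) : Prop :=
  (forall n, finite_set (V n)) /\
  (forall n, \bigcup_(v in V n) v = [set: Z]) /\
  ((forall n v, V n v -> open v) \/
     (forall n v, V n v -> closed v /\ interior v !=set0)) /\
  V 0%N = [set [set: Z]] /\
  (forall n w, V n.+1 w -> exists2 v, V n v & w `<=` v) /\
  (forall e : R, 0 < e -> exists N : nat, forall n, (N <= n)%N ->
     forall v, V n v -> (diam v <= e%:E)%E).

(* An edge of the approximation graph from level n to level n+1,
   represented by its source v_n (first component) and range v_{n+1}
   (second component); there is at most one edge between two vertices. *)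
Definition edge (V : nat -> set (set Z)) (n : nat) (e : set Z * set Z) : Prop :=
  [/\ V n e.1, V n.+1 e.2 & e.2 `<=` e.1].

Definition path_space (V : nat -> set (set Z)) : set (nat -> set Z * set Z) :=
  [set p | forall n, edge V n (p n) /\ (p n).2 = (p n.+1).1].

(* pi_Gamma p = the unique point of \bigcap_n cl(r(p_n)); z0 is only a
   default value for the choice operator xget. *)
Definition pi_Gamma (z0 : Z) (p : nat -> set Z * set Z) : Z :=
  xget z0 (\bigcap_(n in [set: nat]) closure (p n).2).

Definition I_Gamma (z0 : Z) (V : nat -> set (set Z)) : set (nat -> set Z * set Z) :=
  [set p | path_space V p /\
     [set q | path_space V q /\ pi_Gamma z0 q = pi_Gamma z0 p] = [set p]].

Definition overlap (V : nat -> set (set Z)) (n : nat) : set (set Z) :=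
  [set A | exists v w, [/\ V n v, V n w, v <> w & A = closure v `&` closure w]].

Definition ess (V : nat -> set (set Z)) (n : nat) (v : set Z) : set Z :=
  interior v `\` \bigcup_(A in overlap V n) A.

Definition regular (V : nat -> set (set Z)) : Prop :=
  forall n v, V n v ->
    v = \bigcup_(w in [set w | V n.+1 w /\ w `<=` v]) w /\ ess V n v !=set0.

End ApproxGraph.

From HB Require Import structures.
From mathcomp Require Import all_boot all_order all_algebra.
From mathcomp Require Import all_classical all_reals all_analysis.
From mathcomp Require Import lra.
Import Order.TTheory GRing.Theory Num.Theory.
Local Open Scope classical_set_scope.
Local Open Scope ring_scope.

(* A path of Gamma determines its point through the nested closures of its
   vertices, and conversely a point x yields a path for every vertex v whose
   closure contains x: climb from v through parents, descend through children
   whose closures still contain x (each vertex is the finite union of its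
   children).  If x is in the essential part of some element of every V_n, the
   vertex at level n of any path over x is forced, so the path is unique.  If x
   misses the essential parts at level n, then x lies in the closures of two
   distinct elements of V_n, and the two paths through them are distinct paths
   over x. *)

Lemma closure_bigcup_finite {T : topologicalType} {F : set (set T)} :
  finite_set F -> closure (\bigcup_(A in F) A) `<=` \bigcup_(A in F) closure A.
Proof.
move=> finF; rewrite closureE; apply: smallest_sub.
  by apply: closed_bigcup => // A _; exact: closed_closure.
by move=> x [A FA Ax]; exists A => //; exact: subset_closure.
Qed.

Lemma compact_nonincreasing_closure {T : topologicalType} {A : nat -> set T} :
  compact [set: T] -> (forall k, A k !=set0) -> nonincreasing_seq A ->
  exists x, forall k, closure (A k) x.
Proof.
move=> cT A0 Adec.
have FA : ProperFilter (filter_from setT A).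
  apply: filter_from_proper => [|k _]; last exact: A0.
  apply: filter_fromT_filter => [|i j]; first by exists 0%N.
  by exists (maxn i j); rewrite subsetI -!subsetEset; split; apply: Adec;
    [exact: leq_maxl|exact: leq_maxr].
have [x [_ Ax]] := cT _ FA filterT.
by exists x => k B xB; apply: (Ax _ B) => //; exists k.
Qed.

Section Diameter.
Context {R : realType} {Z : metricType R}.

Lemma mdist_le_diam {A : set Z} {y z} :
  A y -> A z -> ((mdist y z)%:E <= diam A)%E.
Proof. by move=> Ay Az; apply: ereal_sup_ubound; exists y, z. Qed.

Lemma eq_closure_diam_small {A : nat -> set Z} {y z : Z} :
  (forall e, 0 < e -> exists k, (diam (A k) <= e%:E)%E) ->
  (forall k, closure (A k) y) -> (forall k, closure (A k) z) -> y = z.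
Proof.
move=> Asmall Ay Az; apply: contrapT => yz.
have d0 : 0 < mdist y z by rewrite mdist_gt0; exact/eqP.
have e0 : 0 < mdist y z / 4 by rewrite divr_gt0.
have [k Ak] := Asmall _ e0.
have [y' [Ay' yy']] := Ay k _ (nbhsx_ballx y _ e0).
have [z' [Az' zz']] := Az k _ (nbhsx_ballx z _ e0).
rewrite !ballEmdist /= in yy' zz'.
have := le_trans (mdist_le_diam Ay' Az') Ak; rewrite lee_fin => y'z'.
have := metric_triangle y y' z; have := metric_triangle y' z' z.
rewrite (metric_sym z' z); lra.
Qed.

End Diameter.

Section ApproximationGraph.
Context {R : realType} {Z : metricType R}.
Variables (V : nat -> set (set Z)) (z0 : Z).
Hypothesis V_finite : forall n, finite_set (V n).
Hypothesis V_cover : forall n, \bigcup_(v in V n) v = [set: Z].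
Hypothesis V0 : V 0%N = [set [set: Z]].
Hypothesis V_parent : forall n w, V n.+1 w -> exists2 v, V n v & w `<=` v.
Hypothesis V_mesh : forall e : R, 0 < e ->
  exists N : nat, forall n, (N <= n)%N -> forall v, V n v -> (diam v <= e%:E)%E.
Hypothesis V_regular : regular V.
Hypothesis Z_compact : compact [set: Z].

Lemma regular_nonempty n v : V n v -> v !=set0.
Proof.
by move=> /V_regular[_ [x [vx _]]]; exists x; exact: interior_subset.
Qed.

Lemma path_space_vertex {p} k : path_space V p -> V k.+1 (p k).2.
Proof. by move=> /(_ k) [[]]. Qed.

Lemma path_space_nonincreasing {p} :
  path_space V p -> nonincreasing_seq (fun k => (p k).2).
Proof.
move=> pP; apply/nonincreasing_seqP => k; rewrite subsetEset.
by have [[_ _ sub] _] := pP k.+1; have [_ ->] := pP k.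
Qed.

Lemma pi_Gamma_closure {p} k :
  path_space V p -> closure (p k).2 (pi_Gamma z0 p).
Proof.
move=> pP; have [|x px] := compact_nonincreasing_closure Z_compact _
  (path_space_nonincreasing pP).
  by move=> j; apply: regular_nonempty (path_space_vertex j pP).
by have := xgetPex z0 (ex_intro _ x (fun n _ => px n)); apply.
Qed.

Lemma pi_GammaE p x : path_space V p -> (forall k, closure (p k).2 x) ->
  pi_Gamma z0 p = x.
Proof.
move=> pP px; apply: xget_unique => [n _|y py]; first exact: px.
apply: (eq_closure_diam_small _ (fun k => py k I) px) => e e0.
have [N smallN] := V_mesh _ e0.
by exists N; apply: (smallN N.+1) => //; exact: path_space_vertex.
Qed.

Lemma path_space_eq {p q} : path_space V p -> path_space V q ->
  (forall k, (p k).2 = (q k).2) -> p = q.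
Proof.
move=> pP qP pq; apply/funext => k.
rewrite [p k]surjective_pairing [q k]surjective_pairing pq; congr pair.
case: k => [|k]; last by have [_ <-] := pP k; have [_ <-] := qP k; rewrite pq.
by have [[+ _ _] _] := pP 0%N; have [[+ _ _] _] := qP 0%N; rewrite V0 => -> ->.
Qed.

Lemma closure_child {k w x} : V k w -> closure w x ->
  exists2 c, V k.+1 c & c `<=` w /\ closure c x.
Proof.
move=> Vw; have [-> _] := V_regular _ _ Vw.
have fin : finite_set [set c | V k.+1 c /\ c `<=` w].
  by apply: sub_finite_set (V_finite k.+1) => c [].
move=> /(closure_bigcup_finite fin) [c [Vc cw] cx].
by exists c => //; split => //; rewrite -(V_regular _ _ Vw).1.
Qed.

Lemma descending_branch {x j v} : V j v -> closure v x ->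
  exists2 d, d j = v & forall k, (j <= k)%N ->
    [/\ V k (d k), d k.+1 `<=` d k & closure (d k) x].
Proof.
move=> Vv vx.
pose admissible k w := [set c | [/\ V k.+1 c, c `<=` w & closure c x]].
pose child k w := xget w (admissible k w).
have childP k w : V k w -> closure w x -> admissible k w (child k w).
  move=> Vw wx; apply: xgetPex.
  by have [c Vc [cw cx]] := closure_child Vw wx; exists c.
pose d k := iteri k (fun i w => if (i < j)%N then w else child i w) v.
have d_below k : (k <= j)%N -> d k = v.
  by elim: k => // k IH ltkj /=; rewrite ltkj IH // ltnW.
have d_above k : (j <= k)%N -> d k.+1 = child k (d k).
  by move=> jk /=; rewrite ltnNge jk.
have dP i : V (j + i)%N (d (j + i)%N) /\ closure (d (j + i)%N) x.
  elim: i => [|i [Vd dx]]; first by rewrite addn0 d_below //; split.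
  by rewrite addnS d_above ?leq_addr //; have [? _ ?] := childP _ _ Vd dx.
exists d => [|k jk]; first exact: d_below.
have [] := dP (k - j)%N; rewrite subnKC // => Vd dx.
by rewrite d_above //; have [_ ? _] := childP _ _ Vd dx.
Qed.

Definition branch x (u : nat -> set Z) :=
  forall k, [/\ V k (u k), u k.+1 `<=` u k & closure (u k) x].

Lemma branch_through {x j v} :
  V j v -> closure v x -> exists2 u, branch x u & u j = v.
Proof.
elim: j v => [|j IH] v Vv vx.
  by have [d dv dP] := descending_branch Vv vx; exists d => // k; exact: dP.
have [w Vw vw] := V_parent _ _ Vv.
have [u ubr uw] := IH w Vw (closureS vw vx).
have [d dv dP] := descending_branch Vv vx.
exists (fun k => if (k <= j)%N then u k else d k); last by rewrite ltnn.
move=> k; case: (ltngtP k j) => [_|/dP //|->]; first exact: ubr.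
by rewrite uw dv; split => //; exact: closureS vx.
Qed.

Lemma branch_path x u : branch x u ->
  let p := fun k => (u k, u k.+1) in path_space V p /\ pi_Gamma z0 p = x.
Proof.
move=> ubr; have pP : path_space V (fun k => (u k, u k.+1)).
  by move=> k; have [? ? _] := ubr k; have [? _ _] := ubr k.+1.
by split => //; apply: pi_GammaE pP _ => k; have [] := ubr k.+1.
Qed.

Lemma path_through {x m v} : V m.+1 v -> closure v x ->
  exists2 q, path_space V q /\ pi_Gamma z0 q = x & (q m).2 = v.
Proof.
move=> Vv vx; have [u /branch_path ubr uv] := branch_through Vv vx.
by exists (fun k => (u k, u k.+1)).
Qed.

Lemma ess_closure_unique {n u v x} :
  V n u -> V n v -> ess V n v x -> closure u x -> u = v.
Proof.
move=> Vu Vv [vx notY] ux; apply: contrapT => uv; apply: notY.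
exists (closure u `&` closure v); first by exists u, v; split.
by split => //; apply: subset_closure; exact: interior_subset.
Qed.

Lemma ess_of_closure_unique n x :
  (forall v w, V n v -> V n w -> closure v x -> closure w x -> v = w) ->
  exists2 v, V n v & ess V n v x.
Proof.
move=> uniq_x; have [u Vu ux] : (\bigcup_(v in V n) v) x by rewrite V_cover.
exists u => //; split; last first.
  by move=> [_ [v [w [Vv Vw vw ->]]] [vx wx]]; exact/vw/uniq_x.
apply: contrapT => nux; have : closure (~` u) x by rewrite closure_setC.
have others : ~` u `<=` \bigcup_(w in [set w | V n w /\ w <> u]) w.
  move=> y uy; have [w Vw wy] : (\bigcup_(v in V n) v) y by rewrite V_cover.
  by exists w => //; split => // wu; apply: uy; rewrite -wu.
have fin : finite_set [set w | V n w /\ w <> u].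
  by apply: sub_finite_set (V_finite n) => w [].
move=> /(closureS others) /(closure_bigcup_finite fin) [w [Vw wu] wx].
exact: wu (uniq_x _ _ Vw Vu wx (subset_closure ux)).
Qed.

Lemma I_Gamma_ess {p} n : I_Gamma z0 V p ->
  (\bigcup_(v in V n) ess V n v) (pi_Gamma z0 p).
Proof.
move=> [pP p_unique]; set x := pi_Gamma z0 p.
have path_over_x q : path_space V q /\ pi_Gamma z0 q = x -> q = p.
  by move=> qx; have : [set p] q by rewrite -p_unique.
apply: ess_of_closure_unique; case: n => [|m] v w Vv Vw vx wx.
  by move: Vv Vw; rewrite V0 => -> ->.
have [q /path_over_x -> <-] := path_through Vv vx.
by have [q' /path_over_x -> <-] := path_through Vw wx.
Qed.

Lemma ess_I_Gamma {p} : path_space V p ->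
  (forall n, (\bigcup_(v in V n) ess V n v) (pi_Gamma z0 p)) -> I_Gamma z0 V p.
Proof.
move=> pP p_ess; split => //; apply/seteqP; split => [q [qP qx]|q ->] //=.
apply: (path_space_eq qP pP) => k; have [v Vv vx] := p_ess k.+1.
rewrite (ess_closure_unique (path_space_vertex k pP) Vv vx
  (pi_Gamma_closure k pP)).
apply: (ess_closure_unique (path_space_vertex k qP) Vv vx).
by rewrite -qx; exact: pi_Gamma_closure.
Qed.

End ApproximationGraph.

Theorem proposition2p22 (R : realType) (Z : metricType R) (z0 : Z)
  (V : nat -> set (set Z)) :
  compact [set: Z] -> ~ finite_set [set: Z] ->
  refining_sequence V -> regular V ->
  I_Gamma z0 V =
    path_space V `&`
      pi_Gamma z0 @^-1` (\bigcap_(n in [set: nat]) \bigcup_(v in V n) ess V n v).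
Proof.
move=> Z_compact _ [V_finite [V_cover [_ [V0 [V_parent V_mesh]]]]] V_regular.
apply/seteqP; split => p.
  move=> Ip; split; first exact: Ip.1.
  move=> n _.
  exact: (I_Gamma_ess V z0 V_finite V_cover V0 V_parent V_mesh V_regular n Ip).
move=> [pP p_ess]; apply: (ess_I_Gamma V z0 V0 V_regular Z_compact pP).
by move=> n; exact: p_ess.
Qed.
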